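(* Let $f\colon X\to Y$ be a continuous function between compact Hausdorff spaces. (1) For every $V\in\mathsf{RO}(Y)$, $\mathrm{int}(\mathrm{cl}(f^{-1}[V]))=\bigvee\{U\in\mathsf{RO}(X)\mid f[\mathrm{cl}(U)]\subseteq V\}$, the join computed in $\mathsf{RO}(X)$. (2) For every $U\in\mathsf{RO}(X)$ and $V\in\mathsf{RO}(Y)$, $f[\mathrm{cl}(U)]\subseteq V$ if and only if there is $V'\in\mathsf{RO}(Y)$ with $\mathrm{cl}(V')\subseteq V$ and $U\subseteq\mathrm{int}(\mathrm{cl}(f^{-1}[V']))$.
   Context: $\mathsf{RO}(X)$ denotes the complete boolean algebra of regular open subsets of $X$ (sets $U$ with $U=\mathrm{int}(\mathrm{cl}(U))$), with joins $\bigvee_i U_i=\mathrm{int}(\mathrm{cl}(\bigcup_i U_i))$. *)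

From HB Require Import structures.
From mathcomp Require Import all_boot all_order all_algebra.
From mathcomp Require Import all_classical all_reals all_analysis.
Set Implicit Arguments. Unset Strict Implicit. Unset Printing Implicit Defensive.
Local Open Scope classical_set_scope.

Definition regular_open {T : topologicalType} (U : set T) : Prop :=
  U = (closure U)°.

Definition ro_join {T : topologicalType} (F : set (set T)) : set T :=
  (closure (\bigcup_(U in F) U))°.

From HB Require Import structures.
From mathcomp Require Import all_boot all_order all_algebra.
From mathcomp Require Import all_classical all_reals all_analysis.
Local Open Scope classical_set_scope.

(* Compact Hausdorff spaces are normal, so a closed set inside an open set B
   has a regular open neighbourhood whose closure still lies in B.  With the
   closed set {x} ⊆ f^-1[V] this produces enough members of the join in (1);
   with the compact, hence closed, image f[cl U] ⊆ V it produces the witness V'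
   in (2).  The converse of (2) is continuity: cl (f^-1[V']) ⊆ f^-1[cl V']. *)

Lemma regular_open_open {T : topologicalType} {U : set T} :
  regular_open U -> open U.
Proof. by move=> ->; exact: open_interior. Qed.

Lemma regular_open_interior_closure {T : topologicalType} {A : set T} :
  regular_open (closure A)°.
Proof. exact/esym/(interior_closure_idem A). Qed.

Lemma closure_interior_closure_sub {T : topologicalType} {A : set T} :
  closure (closure A)° `<=` closure A.
Proof.
rewrite {2}((closure_id _).1 (@closed_closure _ A)).
exact: closureS (@interior_subset _ _).
Qed.

Lemma open_sub_interior_closure {T : topologicalType} {A : set T} :
  open A -> A `<=` (closure A)°.
Proof. by move=> oA; rewrite -open_subsetE //; exact: subset_closure. Qed.

Lemma compact_hausdorff_shrink {T : topologicalType} {A B : set T} :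
  compact [set: T] -> hausdorff_space T ->
  closed A -> open B -> A `<=` B ->
  exists C, open C /\ A `<=` C /\ closure C `<=` B.
Proof.
move=> cT hT clA oB AB.
have nbhsB : set_nbhs A B by apply/set_nbhsP; exists B; split.
have [D nbhsD clDB] := compact_normal hT cT clA nbhsB.
have [C [oC AC CD]] := (set_nbhsP _ _).1 nbhsD.
by exists C; do 2!split => //; exact: subset_trans (closureS CD) clDB.
Qed.

Lemma compact_hausdorff_regular_open_shrink {T : topologicalType} {A B : set T} :
  compact [set: T] -> hausdorff_space T ->
  closed A -> open B -> A `<=` B ->
  exists C, regular_open C /\ A `<=` C /\ closure C `<=` B.
Proof.
move=> cT hT clA oB AB.
have [C [oC [AC clCB]]] := compact_hausdorff_shrink cT hT clA oB AB.
exists (closure C)°; split; first exact: regular_open_interior_closure.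
split; first exact: subset_trans AC (open_sub_interior_closure oC).
exact: subset_trans (@closure_interior_closure_sub _ C) clCB.
Qed.

Lemma closure_preimage_sub {X Y : topologicalType} {f : X -> Y} {V : set Y} :
  continuous f -> closure (f @^-1` V) `<=` f @^-1` closure V.
Proof.
move=> hf x clx B nB.
have [z [Vz Bz]] := clx _ (hf x B nB).
by exists (f z).
Qed.

Theorem proposition6p12 (X Y : topologicalType) (f : X -> Y)
  (hX : compact [set: X]) (hXH : hausdorff_space X)
  (hY : compact [set: Y]) (hYH : hausdorff_space Y)
  (hf : continuous f) :
  (forall V : set Y, regular_open V ->
     (closure (f @^-1` V))° =
     ro_join [set U : set X | regular_open U /\ f @` closure U `<=` V])
  /\
  (forall (U : set X) (V : set Y), regular_open U -> regular_open V ->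
     (f @` closure U `<=` V <->
      exists V' : set Y, regular_open V' /\ closure V' `<=` V /\
                         U `<=` (closure (f @^-1` V'))°)).
Proof.
split=> [V rV | U V rU rV].
  rewrite /ro_join; apply/seteqP; split; apply/interiorS/closureS.
    move=> x Vfx.
    have closed_x := @accessible_closed_set1 _ (hausdorff_accessible hXH) x.
    have open_preV := open_comp (fun z _ => hf z) (regular_open_open rV).
    have x_preV : [set x] `<=` f @^-1` V by move=> _ ->.
    have [C [rC [Cx clCV]]] := compact_hausdorff_regular_open_shrink hX hXH
      closed_x open_preV x_preV.
    by exists C; [split=> // _ [z /clCV Vfz <-] | exact: Cx].
  by move=> x [C [_ fCV] Cx]; apply: fCV; exists x => //; exact: subset_closure.
split=> [fUV | [V' [_ [clV'V UV']]] _ [z clUz <-]].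
  have compact_fU : compact (f @` closure U).
    apply: continuous_compact; first by apply: continuous_subspaceT => x; exact: hf.
    exact: subclosed_compact (@closed_closure _ U) hX (@subsetT _ _).
  have [V' [rV' [fUV' clV'V]]] := compact_hausdorff_regular_open_shrink hY hYH
    (compact_closed hYH compact_fU) (regular_open_open rV) fUV.
  exists V'; do 2!split => //.
  rewrite {1}rU; apply/interiorS/closureS=> x Ux.
  by apply: fUV'; exists x => //; exact: subset_closure.
apply/clV'V/(closure_preimage_sub hf)/closure_interior_closure_sub.
exact: closureS UV' _ clUz.
Qed.
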